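(* Let $0\leq B<1$, $q\geq3$, $\Delta\geq3$, $d=\Delta-1$, and let $(R_1,\dots,R_q,C_1,\dots,C_q)$ be a positive solution of the system \[R_i\propto\Big(BC_i+\sum_{j\neq i}C_j\Big)^{d},\qquad C_j\propto\Big(BR_j+\sum_{i\neq j}R_i\Big)^{d}\qquad(i,j\in[q]).\] Let $t_R$ be the number of distinct values among $R_1,\dots,R_q$ and $t_C$ the number of distinct values among $C_1,\dots,C_q$. Then $t_R,t_C\leq3$ and $t_R=t_C$.
   Context: Proportionality constants in the system are independent of $i$ (resp. $j$). This is the tree recursion fixpoint system of the antiferromagnetic $q$-state Potts model with parameter $B$ ($B=0$: colorings). *)

From HB Require Import structures.
From mathcomp Require Import all_boot all_order all_algebra.
From mathcomp Require Import reals.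
Set Implicit Arguments. Unset Strict Implicit. Unset Printing Implicit Defensive.
Import Order.TTheory GRing.Theory Num.Theory.
Local Open Scope ring_scope.

Definition nvals (K : eqType) (q : nat) (x : 'I_q -> K) : nat :=
  size (undup [seq x i | i <- enum 'I_q]).

Definition potts_fixpoint (K : realType) (q d : nat) (B : K)
    (R C : 'I_q -> K) : Prop :=
  (exists a : K, 0 < a /\ forall i : 'I_q,
      R i = a * (B * C i + \sum_(j < q | j != i) C j) ^+ d) /\
  (exists b : K, 0 < b /\ forall j : 'I_q,
      C j = b * (B * R j + \sum_(i < q | i != j) R i) ^+ d).

From HB Require Import structures.
From mathcomp Require Import all_boot all_order all_algebra.
From mathcomp Require Import reals.
From mathcomp Require Import polyrcf ring lra.
Set Implicit Arguments. Unset Strict Implicit. Unset Printing Implicit Defensive.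
Import Order.TTheory GRing.Theory Num.Theory.
Local Open Scope ring_scope.

(* Put u_i := B C_i + sum_(j <> i) C_j = S_C - (1-B) C_i and similarly v_i, so that
   R_i = a u_i^d and C_i = b v_i^d.  Eliminating v, every u_i is a positive root of
   f(x) = S_C - (1-B) b (S_R - (1-B) a x^d)^d - x.  Since
   f'(w) = const * g(w)^(d-1) - 1 with g(w) := w (S_R - (1-B) a w^d), all
   critical points of f at which g >= 0 have the same g-value.  Four roots of f would give, by
   Rolle, three critical points of f, hence two distinct positive critical points
   of g; but g'(z) = S_R - (1-B) a (d+1) z^d vanishes at most once on [0, oo).  As
   C_i = C_j iff u_i = u_j iff R_i = R_j, the three vectors share their number of
   values, which is at most 3. *)

Lemma eq_nvals (T1 T2 : eqType) q (x : 'I_q -> T1) (y : 'I_q -> T2) :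
  (forall i j, (x i == x j) = (y i == y j)) -> nvals x = nvals y.
Proof.
move=> eq_xy; rewrite /nvals; elim: (enum 'I_q) => [|a s IHs] //=.
have -> : (x a \in [seq x i | i <- s]) = (y a \in [seq y i | i <- s]).
  apply/mapP/mapP => -[b bs e]; exists b => //; apply/eqP.
    by rewrite -eq_xy e.
  by rewrite eq_xy e.
by case: ifP => _ //=; rewrite IHs.
Qed.

Lemma nvals_le3 (T : realDomainType) q (x : 'I_q -> T) :
  (forall i1 i2 i3 i4, x i1 < x i2 -> x i2 < x i3 -> x i3 < x i4 -> False) ->
  (nvals x <= 3)%N.
Proof.
move=> no_chain; rewrite /nvals leqNgt; apply/negP; set s := undup _ => size_s.
set t := sort <=%O s.
have t_sorted : sorted <%O t.
  by rewrite lt_sorted_uniq_le sort_uniq undup_uniq sort_sorted //; exact: le_total.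
have size_t : (3 < size t)%N by rewrite size_sort.
have t_val k : (k < 4)%N -> exists i, nth 0 t k = x i.
  move=> lt_k; have : nth 0 t k \in s by rewrite -(mem_sort <=%O) mem_nth // (leq_trans lt_k).
  by rewrite mem_undup => /mapP [i _ ->]; exists i.
have t_lt k : (k < 3)%N -> nth 0 t k < nth 0 t k.+1.
  move=> lt_k3; apply: (sorted_ltn_nth lt_trans); rewrite ?inE //.
  - exact: ltn_trans lt_k3 size_t.
  - exact: leq_ltn_trans lt_k3 size_t.
have [i1 e1] := t_val 0%N isT.
have [i2 e2] := t_val 1%N isT.
have [i3 e3] := t_val 2%N isT.
have [i4 e4] := t_val 3%N isT.
by apply: (no_chain i1 i2 i3 i4); rewrite -?e1 -?e2 -?e3 -?e4 t_lt.
Qed.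

Lemma mul_add_sum_neq (T : comNzRingType) q (B : T) (x : 'I_q -> T) i :
  B * x i + \sum_(j < q | j != i) x j = \sum_(j < q) x j - (1 - B) * x i.
Proof. by rewrite [X in _ = X - _](bigD1 i) //=; ring. Qed.

Lemma mul_add_sum_neq_gt0 (T : realDomainType) q (B : T) (x : 'I_q -> T) i :
  (1 < q)%N -> 0 <= B -> (forall j, 0 < x j) ->
  0 < B * x i + \sum_(j < q | j != i) x j.
Proof.
move=> q_gt1 B_ge0 x_gt0.
have [j ji] : exists j : 'I_q, j != i.
  have q_gt0 : (0 < q)%N by apply: ltn_trans q_gt1.
  case: (eqVneq i (Ordinal q_gt0)) => [->|i_neq0]; last by exists (Ordinal q_gt0); rewrite eq_sym.
  by exists (Ordinal q_gt1); apply/eqP => -[].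
rewrite (bigD1 j) //=.
have : 0 <= \sum_(k < q | (k != i) && (k != j)) x k by apply: sumr_ge0 => k _; apply: ltW.
have := x_gt0 j; have : 0 <= B * x i by rewrite mulr_ge0 // ltW.
lra.
Qed.

Section FixpointPolynomial.
Variables (R : rcfType) (d : nat) (SC SR k1 k2 : R).

Definition fixpt_prod_poly : {poly R} := 'X * (SR%:P - k2 *: 'X^d).

Definition fixpt_poly : {poly R} := SC%:P - k1 *: (SR%:P - k2 *: 'X^d) ^+ d - 'X.

Lemma horner_fixpt_poly w : fixpt_poly.[w] = SC - k1 * (SR - k2 * w ^+ d) ^+ d - w.
Proof. by rewrite !hornerE. Qed.

Lemma horner_fixpt_prod_poly w : fixpt_prod_poly.[w] = w * (SR - k2 * w ^+ d).
Proof. by rewrite !hornerE. Qed.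

Lemma horner_deriv_fixpt_poly w :
  fixpt_poly^`().[w] = k1 * k2 * d%:R ^+ 2 * fixpt_prod_poly.[w] ^+ d.-1 - 1.
Proof.
rewrite horner_fixpt_prod_poly /fixpt_poly !derivE deriv_exp !derivE.
rewrite !(hornerD, hornerN, hornerZ, hornerM, hornerMn, horner_exp, hornerC, hornerXn, hornerX).
by rewrite exprMn; ring.
Qed.

Lemma horner_deriv_fixpt_prod_poly w :
  fixpt_prod_poly^`().[w] = SR - k2 * d.+1%:R * w ^+ d.
Proof.
rewrite /fixpt_prod_poly !derivE -addn1 natrD.
rewrite !(hornerD, hornerN, hornerZ, hornerM, hornerMn, hornerC, hornerXn, hornerX).
by case: d => [|n]; rewrite ?exprS; ring.
Qed.

Hypotheses (d_gt1 : (1 < d)%N) (k1_gt0 : 0 < k1) (k2_gt0 : 0 < k2).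

Let d_gt0 : (0 < d)%N. Proof. exact: ltn_trans d_gt1. Qed.

Lemma deriv_fixpt_prod_poly_root_uniq z1 z2 : 0 <= z1 -> 0 <= z2 ->
  fixpt_prod_poly^`().[z1] = 0 -> fixpt_prod_poly^`().[z2] = 0 -> z1 = z2.
Proof.
rewrite !horner_deriv_fixpt_prod_poly => z1_ge0 z2_ge0 root1 root2.
have k2d_neq0 : k2 * d.+1%:R != 0 by rewrite mulf_neq0 ?gt_eqF.
apply/eqP; rewrite -(eqrXn2 d_gt0) //; apply/eqP/(mulfI k2d_neq0); lra.
Qed.

Lemma fixpt_prod_poly_eq_at_crit w1 w2 :
  0 <= fixpt_prod_poly.[w1] -> 0 <= fixpt_prod_poly.[w2] ->
  fixpt_poly^`().[w1] = 0 -> fixpt_poly^`().[w2] = 0 ->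
  fixpt_prod_poly.[w1] = fixpt_prod_poly.[w2].
Proof.
rewrite !horner_deriv_fixpt_poly => g1_ge0 g2_ge0 crit1 crit2.
have c_neq0 : k1 * k2 * d%:R ^+ 2 != 0.
  by rewrite !mulf_neq0 ?gt_eqF ?exprn_gt0 ?ltr0n.
have d1_gt0 : (0 < d.-1)%N by rewrite -ltnS prednK.
apply/eqP; rewrite -(eqrXn2 d1_gt0) //; apply/eqP/(mulfI c_neq0); lra.
Qed.

Lemma fixpt_poly_no_four_roots x1 x2 x3 x4 :
  0 < x1 -> x1 < x2 -> x2 < x3 -> x3 < x4 -> 0 < SR - k2 * x4 ^+ d ->
  fixpt_poly.[x1] = 0 -> fixpt_poly.[x2] = 0 ->
  fixpt_poly.[x3] = 0 -> fixpt_poly.[x4] = 0 -> False.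
Proof.
move=> x1_gt0 lt12 lt23 lt34 x4_dom f1 f2 f3 f4.
have g_ge0 w : x1 < w -> w < x4 -> 0 <= fixpt_prod_poly.[w].
  move=> x1w wx4; have w_gt0 : 0 < w := lt_trans x1_gt0 x1w.
  have : w ^+ d <= x4 ^+ d by apply: lerXn2r; rewrite ?nnegrE; lra.
  rewrite -(ler_pM2l k2_gt0) horner_fixpt_prod_poly => k2wd_le.
  by rewrite mulr_ge0 ?ltW //; lra.
have [w1 /[!in_itv] /= /andP[x1w1 w1x2] crit1] := poly_rolle lt12 (etrans f1 (esym f2)).
have [w2 /[!in_itv] /= /andP[x2w2 w2x3] crit2] := poly_rolle lt23 (etrans f2 (esym f3)).
have [w3 /[!in_itv] /= /andP[x3w3 w3x4] crit3] := poly_rolle lt34 (etrans f3 (esym f4)).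
have g12 : fixpt_prod_poly.[w1] = fixpt_prod_poly.[w2].
  by apply: fixpt_prod_poly_eq_at_crit => //; apply: g_ge0; lra.
have g23 : fixpt_prod_poly.[w2] = fixpt_prod_poly.[w3].
  by apply: fixpt_prod_poly_eq_at_crit => //; apply: g_ge0; lra.
have [z1 /[!in_itv] /= /andP[w1z1 z1w2] gcrit1] := poly_rolle (lt_trans w1x2 x2w2) g12.
have [z2 /[!in_itv] /= /andP[w2z2 z2w3] gcrit2] := poly_rolle (lt_trans w2x3 x3w3) g23.
have z1_ge0 : 0 <= z1 by lra.
have z2_ge0 : 0 <= z2 by lra.
have := deriv_fixpt_prod_poly_root_uniq z1_ge0 z2_ge0 gcrit1 gcrit2.
lra.
Qed.

Lemma nvals_fixpt_roots_le3 q (x : 'I_q -> R) :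
  (forall i, 0 < x i) -> (forall i, 0 < SR - k2 * x i ^+ d) ->
  (forall i, fixpt_poly.[x i] = 0) -> (nvals x <= 3)%N.
Proof.
move=> x_gt0 x_dom x_root; apply: nvals_le3 => i1 i2 i3 i4 lt12 lt23 lt34.
exact: (fixpt_poly_no_four_roots (x_gt0 i1) lt12 lt23 lt34 (x_dom i4)
  (x_root i1) (x_root i2) (x_root i3) (x_root i4)).
Qed.

End FixpointPolynomial.

Theorem lemma28 (K : realType) (B : K) (q Delta : nat) (R C : 'I_q -> K) :
  0 <= B -> B < 1 -> (3 <= q)%N -> (3 <= Delta)%N ->
  (forall i, 0 < R i) -> (forall j, 0 < C j) ->
  @potts_fixpoint K q (Delta - 1)%N B R C ->
  [/\ (nvals R <= 3)%N, (nvals C <= 3)%N & nvals R = nvals C].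
Proof.
move=> B_ge0 B_lt1 q_ge3 Delta_ge3 R_gt0 C_gt0 [[a [a_gt0 HR]] [b [b_gt0 HC]]].
set d := (Delta - 1)%N in HR HC *.
have d_gt1 : (1 < d)%N by rewrite /d ltn_subRL.
have e_gt0 : 0 < 1 - B by lra.
have q_gt1 : (1 < q)%N by apply: ltn_trans q_ge3.
pose u i := B * C i + \sum_(j < q | j != i) C j.
pose v i := B * R i + \sum_(j < q | j != i) R j.
have u_gt0 i : 0 < u i by apply: mul_add_sum_neq_gt0.
have v_gt0 i : 0 < v i by apply: mul_add_sum_neq_gt0.
have v_of_u i : v i = \sum_(j < q) R j - (1 - B) * a * u i ^+ d.
  by rewrite /v mul_add_sum_neq HR -/(u i); ring.
have u_root i :
    (fixpt_poly d (\sum_(j < q) C j) (\sum_(j < q) R j) ((1 - B) * b) ((1 - B) * a)).[u i] = 0.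
  by rewrite horner_fixpt_poly -v_of_u /u mul_add_sum_neq HC -/(v i); ring.
have eq_Cu i j : (C i == C j) = (u i == u j).
  rewrite /u !mul_add_sum_neq (inj_eq (addrI _)) eqr_opp.
  by rewrite (inj_eq (mulfI (lt0r_neq0 e_gt0))).
have eq_RC i j : (R i == R j) = (C i == C j).
  rewrite eq_Cu !HR -/(u i) -/(u j) (inj_eq (mulfI (lt0r_neq0 a_gt0))).
  by rewrite eqrXn2 ?(ltnW d_gt1) ?ltW.
have nvals_u : (nvals u <= 3)%N.
  apply: (nvals_fixpt_roots_le3 d_gt1 _ _ u_gt0 _ u_root).
  - exact: mulr_gt0.
  - exact: mulr_gt0.
  - by move=> i; rewrite -v_of_u; apply: v_gt0.
by rewrite (eq_nvals eq_RC) (eq_nvals eq_Cu).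
Qed.
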